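(* Let $r>1$, let $x_0,y_0$ be positive integers and let $\{(X_t,Y_t)\}_{t\ge 0}$ be the CA competition process with fitness ratio $r$ started at $(x_0,y_0)$. Let $N=\sum_{t=0}^\infty \mathbf{1}\{X_t=Y_t\}$ be the total number of ties. Then for every positive integer $n$, \[ \mathbb{P}[N\ge n]\le C\left(\frac{2}{1+r}\right)^{n-1}, \] where $C=1$ if $x_0\le y_0$, and \[ C=\frac{(y_0)_{x_0-y_0}}{(rx_0+y_0)_{x_0-y_0}}\left(1+\frac1r\right)^{x_0-y_0}\quad\text{if } x_0>y_0. \]
   Context: The CA competition process with fitness ratio $r\ge 1$ started at $(x_0,y_0)$ is the discrete-time Markov chain $\{(X_t,Y_t)\}_{t\ge0}$ on $\{(x,y)\in\mathbb{Z}^2: x\ge1,y\ge1\}$ with $(X_0,Y_0)=(x_0,y_0)$ and transition probabilities: from $(x,y)$ it moves to $(x+1,y)$ with probability $\frac{rx}{rx+y}$ and to $(x,y+1)$ with probability $\frac{y}{rx+y}$. $(x)_k=\prod_{i=0}^{k-1}(x+i)$ denotes the Pochhammer symbol (with $(x)_0=1$). *)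

From HB Require Import structures.
From mathcomp Require Import all_boot all_order all_algebra.
From mathcomp Require Import all_classical all_reals ereal.
Set Implicit Arguments. Unset Strict Implicit. Unset Printing Implicit Defensive.
Import Order.TTheory GRing.Theory Num.Theory.
Local Open Scope ring_scope.

(* A trajectory of the CA competition process over T steps is encoded by the
   sequence of moves: [true] = the X-coordinate increases, [false] = the
   Y-coordinate increases. *)

Definition ca_step_prob (R : realType) (r : R) (x y : nat) (b : bool) : R :=
  if b then r * x%:R / (r * x%:R + y%:R) else y%:R / (r * x%:R + y%:R).

Fixpoint ca_path_prob (R : realType) (r : R) (x y : nat) (s : seq bool) : R :=
  match s with
  | [::] => 1
  | b :: s' => ca_step_prob r x y b *
               ca_path_prob r (if b then x.+1 else x) (if b then y else y.+1) s'
  end.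

Fixpoint ca_ties (x y : nat) (s : seq bool) : nat :=
  ((x == y) : nat) +
  match s with
  | [::] => 0
  | b :: s' => ca_ties (if b then x.+1 else x) (if b then y else y.+1) s'
  end.

Definition ca_prob_ties_ge_upto (R : realType) (r : R) (x0 y0 T n : nat) : R :=
  \sum_(s : T.-tuple bool | (n <= ca_ties x0 y0 s)%N) ca_path_prob r x0 y0 s.

(* P[N >= n] with N = sum_{t>=0} 1{X_t = Y_t}: the events {N_T >= n} increase
   to {N >= n}, so by continuity of measure this is their supremum. *)
Definition ca_prob_ties_ge (R : realType) (r : R) (x0 y0 n : nat) : \bar R :=
  ereal_sup (range (fun T : nat => (ca_prob_ties_ge_upto r x0 y0 T n)%:E)).

Definition poch (R : realType) (a : R) (k : nat) : R :=
  \prod_(i < k) (a + i%:R).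

From HB Require Import structures.
From mathcomp Require Import all_boot all_order all_algebra.
From mathcomp Require Import all_classical all_reals ereal.
From mathcomp Require Import ring lra zify.
Import Order.TTheory GRing.Theory Num.Theory.
Set Implicit Arguments. Unset Strict Implicit. Unset Printing Implicit Defensive.
Local Open Scope ring_scope.

(* Let C(x, y) be the constant of the theorem computed at (x, y), and let
   g(x, y, n) = C(x, y) (2/(1+r))^(n-1) for n > 0 and g(x, y, 0) = 1.  Then g
   dominates the indicator of having already seen n ties at time 0 and is
   superharmonic for the chain enriched with the number of ties still needed,
   so by induction on the horizon it bounds P[N >= n].  Off the diagonal the
   superharmonicity comes from the two one-step estimates
   p_Y C(x, y+1) = r/(1+r) C(x, y) and p_X C(x+1, y) <= C(x, y)/(1+r), the
   latter from (a+k)^2 (a)_k <= a (a+r)_{k+1} with a = rx+y and k = x-y.  On the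
   diagonal both contributions are at most 1/(1+r): this is the factor 2/(1+r)
   paid per tie. *)

Section Pochhammer.
Variable R : realType.
Implicit Types (a b c : R) (k : nat).

Lemma poch0 a : poch a 0 = 1.
Proof. by rewrite /poch big_ord0. Qed.

Lemma poch_recl a k : poch a k.+1 = a * poch (a + 1) k.
Proof.
rewrite /poch big_ord_recl /= addr0; congr (_ * _); apply: eq_bigr => i _.
by rewrite /bump /= add1n -nat1r addrA.
Qed.

Lemma poch_recr a k : poch a k.+1 = poch a k * (a + k%:R).
Proof. by rewrite /poch big_ord_recr. Qed.

Lemma poch_gt0 a k : 0 < a -> 0 < poch a k.
Proof.
by move=> a_gt0; apply: prodr_gt0 => i _; rewrite (lt_le_trans a_gt0) ?lerDl.
Qed.

Lemma poch_ge0 a k : 0 <= a -> 0 <= poch a k.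
Proof. by move=> a_ge0; apply: prodr_ge0 => i _; rewrite addr_ge0. Qed.

Lemma ler_poch a b k : 0 <= a -> a <= b -> poch a k <= poch b k.
Proof.
by move=> a_ge0 le_ab; apply: ler_prod => i _; rewrite addr_ge0 //= lerD2r.
Qed.

Lemma ler_sqr_poch_shift a c k : 0 <= a -> 1 <= c ->
  (a + k%:R) ^+ 2 * poch a k <= a * poch (a + c) k.+1.
Proof.
move=> a_ge0 c_ge1.
apply: (@le_trans _ _ (a * poch (a + 1) k.+1)); last first.
  by rewrite ler_wpM2l // ler_poch ?lerD2l // addr_ge0.
rewrite -poch_recl !poch_recr -mulrA [leLHS]mulrC ler_wpM2l ?poch_ge0 //.
by rewrite -natr1 addrA expr2 ler_wpM2l ?lerDl // addr_ge0.
Qed.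

End Pochhammer.

Section CompetitionProcess.
Variable R : realType.
Implicit Types (r : R) (x y n T : nat).

Lemma ca_step_prob_ge0 r x y b : 0 <= r -> 0 <= ca_step_prob r x y b.
Proof.
move=> r_ge0; have s_ge0 : 0 <= r * x%:R + y%:R by rewrite addr_ge0 ?mulr_ge0.
by case: b; rewrite /ca_step_prob divr_ge0 ?mulr_ge0.
Qed.

Lemma ca_step_prob_sum r x y : 0 < r -> (0 < x)%N ->
  ca_step_prob r x y true + ca_step_prob r x y false = 1.
Proof.
move=> r_gt0 x_gt0.
have s_gt0 : 0 < r * x%:R + y%:R by rewrite ltr_pwDl ?mulr_gt0 ?ltr0n.
by rewrite /ca_step_prob -mulrDl divff ?gt_eqF.
Qed.

Lemma ca_prob_ties_ge_upto0 r x y n :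
  ca_prob_ties_ge_upto r x y 0 n = (n <= (x == y))%N%:R.
Proof.
rewrite /ca_prob_ties_ge_upto.
rewrite (eq_bigr (fun=> 1)) => [|s _]; last by rewrite tuple0.
rewrite (eq_bigl (fun=> (n <= (x == y))%N)) => [|s]; last by rewrite tuple0 /= addn0.
case: leqP => _; last by rewrite big_pred0.
by rewrite sumr_const card_tuple expn0.
Qed.

Lemma ca_prob_ties_ge_uptoS r x y T n :
  ca_prob_ties_ge_upto r x y T.+1 n =
  ca_step_prob r x y true * ca_prob_ties_ge_upto r x.+1 y T (n - (x == y))%N +
  ca_step_prob r x y false * ca_prob_ties_ge_upto r x y.+1 T (n - (x == y))%N.
Proof.
rewrite /ca_prob_ties_ge_upto.
rewrite (reindex (fun p : bool * T.-tuple bool => [tuple of p.1 :: p.2])) /=; last first.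
  apply: onW_bij; exists (fun s : T.+1.-tuple bool => (thead s, [tuple of behead s])).
  - by case=> b t /=; rewrite theadE; congr pair; apply: val_inj.
  - by move=> s; apply: val_inj; rewrite /= [in RHS](tuple_eta s).
rewrite -(pair_big_dep xpredT (fun b (t : T.-tuple bool) => (n <= ca_ties x y (b :: t))%N)
  (fun b (t : T.-tuple bool) => ca_path_prob r x y (b :: t))) /=.
by rewrite big_bool /= !mulr_sumr; congr (_ + _); apply: eq_big => t; rewrite ?leq_subLR.
Qed.

Lemma ca_prob_ties_ge_upto_le_majorant r (g : nat -> nat -> nat -> R) :
  0 <= r ->
  (forall x y n, (0 < x)%N -> (n <= (x == y))%N%:R <= g x y n) ->
  (forall x y n, (0 < x)%N ->
     ca_step_prob r x y true * g x.+1 y (n - (x == y))%N +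
     ca_step_prob r x y false * g x y.+1 (n - (x == y))%N <= g x y n) ->
  forall T x y n, (0 < x)%N -> ca_prob_ties_ge_upto r x y T n <= g x y n.
Proof.
move=> r_ge0 g_base g_super; elim=> [|T IH] x y n x_gt0.
  by rewrite ca_prob_ties_ge_upto0 g_base.
rewrite ca_prob_ties_ge_uptoS; apply: le_trans (g_super x y n x_gt0).
by apply: lerD; apply: ler_wpM2l; rewrite ?ca_step_prob_ge0 ?IH.
Qed.

End CompetitionProcess.

Section TieBound.
Variable R : realType.
Implicit Types (r : R) (x y n : nat).

Definition ca_tie_const r x y : R :=
  if (x <= y)%N then 1
  else poch y%:R (x - y) / poch (r * x%:R + y%:R) (x - y) * (1 + r^-1) ^+ (x - y).

Definition ca_tie_bound r x y n : R :=
  if n is n'.+1 then ca_tie_const r x y * (2 / (1 + r)) ^+ n' else 1.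

Lemma ca_tie_bound0 r x y : ca_tie_bound r x y 0 = 1.
Proof. by []. Qed.

Lemma ca_tie_boundS r x y n :
  ca_tie_bound r x y n.+1 = ca_tie_const r x y * (2 / (1 + r)) ^+ n.
Proof. by []. Qed.

Lemma ca_tie_const1 r x y : (x <= y)%N -> ca_tie_const r x y = 1.
Proof. by rewrite /ca_tie_const => ->. Qed.

Lemma ca_tie_constE r x y : (y <= x)%N -> ca_tie_const r x y =
  poch y%:R (x - y) / poch (r * x%:R + y%:R) (x - y) * (1 + r^-1) ^+ (x - y).
Proof.
move=> le_yx; rewrite /ca_tie_const; case: (leqP x y) => // le_xy.
have -> : (x - y = 0)%N by lia.
by rewrite !poch0 divr1 mulr1.
Qed.

Lemma ca_tie_const_ge0 r x y : 0 <= r -> 0 <= ca_tie_const r x y.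
Proof.
move=> r_ge0; rewrite /ca_tie_const; case: ifP => // _.
by rewrite !mulr_ge0 ?invr_ge0 ?exprn_ge0 ?poch_ge0 ?addr_ge0 ?mulr_ge0 ?invr_ge0.
Qed.

Lemma ca_tie_bound_ge0 r x y n : 0 <= r -> 0 <= ca_tie_bound r x y n.
Proof.
move=> r_ge0; case: n => //= n.
by rewrite mulr_ge0 ?ca_tie_const_ge0 ?exprn_ge0 ?divr_ge0 ?addr_ge0.
Qed.

Lemma ca_step_probT_tie_const r x y : 1 <= r -> (0 < x)%N -> (y <= x)%N ->
  ca_step_prob r x y true * ca_tie_const r x.+1 y <= ca_tie_const r x y / (1 + r).
Proof.
move=> r_ge1 x_gt0 le_yx.
rewrite !ca_tie_constE ?(leqW le_yx) // subSn // /ca_step_prob.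
set k := (x - y)%N; set X : R := x%:R; set Y : R := y%:R; set a := 1 + r^-1.
have XE : X = Y + k%:R by rewrite /X /Y -natrD subnKC.
have X_gt0 : 0 < X by rewrite ltr0n.
set s := r * X + Y.
have s_gt0 : 0 < s by rewrite ltr_pwDl ?ler0n ?mulr_gt0 //; lra.
have -> : r * x.+1%:R + Y = s + r by rewrite -natr1 /s; ring.
have PYE : poch Y k.+1 = poch Y k * X by rewrite poch_recr XE.
set Ps := poch s k; set D := poch (s + r) k.+1.
have Ps_gt0 : 0 < Ps by apply: poch_gt0.
have hD : ((1 + r) * X) ^+ 2 * Ps <= s * D.
  have -> : (1 + r) * X = s + k%:R by rewrite /s XE; ring.
  exact: ler_sqr_poch_shift (ltW s_gt0) r_ge1.
have D_gt0 : 0 < D by apply: poch_gt0; lra.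
have a_gt0 : 0 < a by apply: addr_gt0; rewrite ?invr_gt0; lra.
set Z := poch Y k * a ^+ k.
have Z_ge0 : 0 <= Z by rewrite mulr_ge0 ?exprn_ge0 ?poch_ge0 ?ler0n ?ltW.
have -> : r * X / s * (poch Y k.+1 / D * a ^+ k.+1) =
    Z / (Ps * (1 + r)) * (((1 + r) * X) ^+ 2 * Ps / (s * D)).
  by rewrite PYE /Z /a exprS; field; rewrite !gt_eqF //; lra.
have -> : poch Y k / Ps * a ^+ k / (1 + r) = Z / (Ps * (1 + r)) * 1.
  by rewrite /Z; field; rewrite !gt_eqF //; lra.
apply: ler_wpM2l; first by rewrite divr_ge0 // mulr_ge0 //; lra.
by rewrite ler_pdivrMr ?mul1r ?mulr_gt0.
Qed.

Lemma ca_step_probF_tie_const r x y : 0 < r -> (y < x)%N ->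
  ca_step_prob r x y false * ca_tie_const r x y.+1 = r / (1 + r) * ca_tie_const r x y.
Proof.
move=> r_gt0 lt_yx.
rewrite (ca_tie_constE _ lt_yx) (ca_tie_constE _ (ltnW lt_yx)) /ca_step_prob.
have [k xyE] : exists k, (x - y = k.+1)%N by exists (x - y).-1; lia.
have -> : (x - y.+1 = k)%N by lia.
rewrite xyE poch_recl (poch_recl (r * _ + _)) -natr1 addrA.
set Y : R := y%:R; set s := r * x%:R + Y.
have s_gt0 : 0 < s by rewrite ltr_pwDl ?ler0n ?mulr_gt0 ?ltr0n //; lia.
have Q_gt0 : 0 < poch (s + 1) k by exact: poch_gt0 (addr_gt0 s_gt0 ltr01).
by rewrite exprS; field; rewrite !gt_eqF //; lra.
Qed.

Lemma ca_tie_bound_base r x y n : 0 <= r ->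
  (n <= (x == y))%N%:R <= ca_tie_bound r x y n.
Proof.
move=> r_ge0; case: leqP => [le_n_tie | _]; last exact: ca_tie_bound_ge0.
case: n le_n_tie => [|[|//]] //=; case: eqVneq => // -> _.
by rewrite ca_tie_const1 ?mulr1.
Qed.

Lemma ca_tie_bound_super r x y n : 1 <= r -> (0 < x)%N ->
  ca_step_prob r x y true * ca_tie_bound r x.+1 y (n - (x == y))%N +
  ca_step_prob r x y false * ca_tie_bound r x y.+1 (n - (x == y))%N
  <= ca_tie_bound r x y n.
Proof.
move=> r_ge1 x_gt0; have r_gt0 : 0 < r by lra.
have sum1 z := ca_step_prob_sum z r_gt0 x_gt0.
have q_ge0 : 0 <= 2 / (1 + r) by rewrite divr_ge0 //; lra.
case: n => [|n]; first by rewrite sub0n !ca_tie_bound0 !mulr1 sum1.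
case: (ltngtP x y) => [lt_xy | lt_yx | <-].
- rewrite subn0 !ca_tie_boundS (ca_tie_const1 _ lt_xy).
  rewrite (ca_tie_const1 _ (leqW (ltnW lt_xy))) (ca_tie_const1 _ (ltnW lt_xy)).
  by rewrite !mul1r -mulrDl sum1 mul1r.
- rewrite subn0 !ca_tie_boundS !mulrA -mulrDl.
  apply: ler_wpM2r; first exact: exprn_ge0.
  have splitC : ca_tie_const r x y =
      ca_tie_const r x y / (1 + r) + r / (1 + r) * ca_tie_const r x y.
    by field; rewrite gt_eqF //; lra.
  rewrite ca_step_probF_tie_const // [leRHS]splitC lerD2r.
  exact: ca_step_probT_tie_const r_ge1 x_gt0 (ltnW lt_yx).
- rewrite subSS subn0 ca_tie_boundS; case: n => [|n].
    by rewrite !ca_tie_bound0 ca_tie_const1 // !mulr1 sum1.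
  rewrite !ca_tie_boundS (ca_tie_const1 _ (leqnSn x)) (ca_tie_const1 _ (leqnn x)).
  rewrite !mul1r mulrA -mulrDl exprS.
  apply: ler_wpM2r; first exact: exprn_ge0.
  have := ca_step_probT_tie_const r_ge1 x_gt0 (leqnn x).
  rewrite (ca_tie_const1 _ (leqnn x)) => probT_le.
  have probF : ca_step_prob r x x false = 1 / (1 + r).
    have x_pos : 0 < (x%:R : R) by rewrite ltr0n.
    by rewrite /ca_step_prob; field; rewrite !gt_eqF //; nra.
  by rewrite probF; apply: le_trans (lerD probT_le (lexx _)) _; rewrite -mulrDl.
Qed.

End TieBound.

Theorem theorem4 (R : realType) (r : R) (x0 y0 n : nat) :
  1 < r -> (0 < x0)%N -> (0 < y0)%N -> (0 < n)%N ->
  let C : R :=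
    if (x0 <= y0)%N then 1
    else poch y0%:R (x0 - y0) / poch (r * x0%:R + y0%:R) (x0 - y0)
         * (1 + r^-1) ^+ (x0 - y0) in
  (ca_prob_ties_ge r x0 y0 n <= (C * (2 / (1 + r)) ^+ (n - 1))%:E)%E.
Proof.
move=> r_gt1 x0_gt0 _ n_gt0 /=.
have r_ge0 : 0 <= r by lra.
apply: ge_ereal_sup => _ [T _ <-]; rewrite lee_fin.
have -> : n = (n - 1).+1 by rewrite subn1 prednK.
rewrite subSS subn0.
apply: (ca_prob_ties_ge_upto_le_majorant (g := ca_tie_bound r)) => //.
- by move=> x y m _; exact: ca_tie_bound_base.
- by move=> x y m; exact: ca_tie_bound_super (ltW r_gt1).
Qed.
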